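(* Let $A$ be a monounary algebra. Then there is $B\in\mathbf R(A)\cap\mathcal U^\bigstar_\bigstar$ such that $\mathbf V(A)=\mathbf V(B)$.
   Context: A monounary algebra is a pair $(A,f)$ with $A$ a nonempty set and $f:A\to A$; direct products are coordinatewise. A monounary algebra is connected if for all $x,y$ there are $m,n\ge0$ with $f^m(x)=f^n(y)$; connected components are the maximal connected subalgebras. A retract of $A$ is a nonempty subalgebra $M$ such that there is an endomorphism $h:A\to M$ with $h|_M=\mathrm{id}$. $\mathbf R(A)$ is the class of algebras isomorphic to a retract of $A$. A retract variety is a class closed under isomorphisms, retracts and direct products; $\mathbf V(\mathcal K)$ is the smallest retract variety containing $\mathcal K$. Condition ($\bigstar\bigstar$) on $A$: among any three pairwise isomorphic connected components $C_1,C_2,C_3$ of $A$ at most two are distinct, i.e. $|\{C_1,C_2,C_3\}|\le2$; $\mathcal U^\bigstar_\bigstar$ is the class of monounary algebras satisfying it. *)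

From mathcomp Require Import all_boot.

Set Implicit Arguments.
Unset Strict Implicit.
Unset Printing Implicit Defensive.

(* Nonemptiness is witnessed by
   an element [pt]; this witness plays no role in homomorphisms,
   isomorphisms, retracts etc. (it only makes nonemptiness constructive). *)
Record Alg : Type := MkAlg {
  carrier :> Type;
  op : carrier -> carrier;
  pt : carrier
}.

Definition hom (A B : Alg) (h : A -> B) : Prop :=
  forall x, h (op x) = op (h x).

Definition iso (A B : Alg) : Prop :=
  exists (h : A -> B) (g : B -> A),
    hom h /\ (forall x, g (h x) = x) /\ (forall y, h (g y) = y).

Definition iso_class (A : Alg) : Alg -> Prop := fun X => iso A X.

Definition closed (A : Alg) (M : A -> Prop) : Prop :=
  forall x, M x -> M (op x).

Definition subalg (A : Alg) (M : A -> Prop) (HM : closed M) (m0 : A)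
  (Hm0 : M m0) : Alg :=
  @MkAlg {x : A | M x}
    (fun x => exist M (op (proj1_sig x)) (HM _ (proj2_sig x)))
    (exist M m0 Hm0).

Definition retract (A : Alg) (M : A -> Prop) : Prop :=
  closed M /\ (exists x, M x) /\
  exists h : A -> A, hom h /\ (forall x, M (h x)) /\ (forall x, M x -> h x = x).

Definition inR (A : Alg) (X : Alg) : Prop :=
  exists (M : A -> Prop) (HM : closed M) (m0 : A) (Hm0 : M m0),
    retract M /\ iso X (subalg HM Hm0).

Definition prodAlg (I : Type) (F : I -> Alg) : Alg :=
  @MkAlg (forall i, F i) (fun x i => op (x i)) (fun i => pt (F i)).

Definition retract_variety (C : Alg -> Prop) : Prop :=
  (forall X Y, iso X Y -> C X -> C Y) /\
  (forall X Y, C X -> inR X Y -> C Y) /\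
  (forall (I : Type) (F : I -> Alg), (forall i, C (F i)) -> C (prodAlg F)).

Definition V (K : Alg -> Prop) : Alg -> Prop :=
  fun X => forall C, retract_variety C -> (forall Y, K Y -> C Y) -> C X.

Definition conn (A : Alg) (x y : A) : Prop :=
  exists m n, iter m (@op A) x = iter n (@op A) y.

Lemma conn_closed (A : Alg) (x : A) : closed (conn x).
Proof.
move=> y [m [n E]]; exists m.+1, n.
by rewrite -iterSr /= E.
Qed.

Lemma conn_refl (A : Alg) (x : A) : conn x x.
Proof. by exists 0, 0. Qed.

Definition component (A : Alg) (x : A) : Alg :=
  subalg (@conn_closed A x) (@conn_refl A x).

Definition same_component (A : Alg) (x y : A) : Prop :=
  forall z, conn x z <-> conn y z.

Definition starstar (A : Alg) : Prop :=
  forall x1 x2 x3 : A,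
    iso (component x1) (component x2) ->
    iso (component x1) (component x3) ->
    iso (component x2) (component x3) ->
    same_component x1 x2 \/ same_component x1 x3 \/ same_component x2 x3.

From Stdlib Require Import ClassicalEpsilon ProofIrrelevance.
From Stdlib Require Import FunctionalExtensionality PropExtensionality.
From Pilot Require Import Defs.
From mathcomp Require Import all_boot.

Set Implicit Arguments.
Unset Strict Implicit.
Unset Printing Implicit Defensive.

(* Keep, in every isomorphism type of connected components of A, at most two
   chosen components; their union B is a retract of A (map every other
   component isomorphically onto the first chosen one), so B satisfies (**)
   and V(B) is contained in V(A).  Conversely A is a retract of a power of B:
   send y to the tuple whose coordinate at (the component of) y is the image
   of y in the second chosen component, and the image in the first chosen
   component elsewhere.  The coordinate where the tuple leaves the first
   component tells back which component y lay in. *)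

Lemma sig_val_inj (T : Type) (P : T -> Prop) (a b : {x | P x}) :
  proj1_sig a = proj1_sig b -> a = b.
Proof. by case: a b => x px [y py] /= E; exact: subset_eq_compat. Qed.

Definition extend (T Y : Type) (N : T -> Prop) (h : {z | N z} -> Y) (d : Y)
    (a : T) : Y :=
  if excluded_middle_informative (N a) is left Na then h (exist N a Na) else d.

Lemma extendE (T Y : Type) (N : T -> Prop) (h : {z | N z} -> Y) (d : Y)
    (a : T) (Na : N a) :
  extend h d a = h (exist N a Na).
Proof.
rewrite /extend; case: excluded_middle_informative => [Na'|//].
by rewrite (proof_irrelevance _ Na' Na).
Qed.

Section Connectivity.
Variable X : Alg.
Implicit Types x y z : X.

Lemma conn_sym x y : conn x y -> conn y x.
Proof. by case=> m [n E]; exists n, m. Qed.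

Lemma conn_trans x y z : conn x y -> conn y z -> conn x z.
Proof.
case=> m [n E] [p [q F]]; exists (p + m), (n + q).
by rewrite iterD E -iterD addnC iterD F -iterD.
Qed.

Lemma conn_op x : conn x (op x).
Proof. by exists 1, 0. Qed.

Lemma conn_eq x y : conn x y -> conn x = conn y.
Proof.
move=> Hxy; apply: functional_extensionality => z.
apply: propositional_extensionality; split.
- exact: conn_trans (conn_sym Hxy).
- exact: conn_trans Hxy.
Qed.

Lemma conn_opE x : conn (op x) = conn x.
Proof. exact/esym/conn_eq/conn_op. Qed.

Lemma conn_opr x y : conn x (op y) = conn x y.
Proof.
apply: propositional_extensionality; split=> H.
- exact: conn_trans H (conn_sym (conn_op y)).
- exact: conn_trans H (conn_op y).
Qed.

Lemma same_component_conn x y : conn x y -> same_component x y.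
Proof. by move=> Hxy z; rewrite (conn_eq Hxy). Qed.

End Connectivity.

Section SubsetIsomorphisms.
Variable X : Alg.
Implicit Types P Q R : X -> Prop.

(* Isomorphisms between subalgebras of X, given by maps on the whole carrier
   so that they compose without dependent types. *)
Record sub_iso P Q (f g : X -> X) : Prop := SubIso {
  sub_iso_maps : forall z, P z -> Q (f z);
  sub_iso_hom : forall z, P z -> f (op z) = op (f z);
  sub_iso_maps_inv : forall z, Q z -> P (g z);
  sub_iso_hom_inv : forall z, Q z -> g (op z) = op (g z);
  sub_iso_K : forall z, P z -> g (f z) = z;
  sub_iso_Kinv : forall z, Q z -> f (g z) = z
}.

Definition sub_isomorphic P Q : Prop := exists f g, sub_iso P Q f g.

Lemma sub_isomorphic_refl P : sub_isomorphic P P.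
Proof. by exists id, id; split. Qed.

Lemma sub_isomorphic_sym P Q : sub_isomorphic P Q -> sub_isomorphic Q P.
Proof. by case=> f [g [? ? ? ? ? ?]]; exists g, f; split. Qed.

Lemma sub_isomorphic_trans P Q R :
  sub_isomorphic P Q -> sub_isomorphic Q R -> sub_isomorphic P R.
Proof.
case=> f [g [f1 f2 g1 g2 fK gK]] [f' [g' [f1' f2' g1' g2' fK' gK']]].
exists (f' \o f), (g \o g'); split=> z Hz /=.
- exact/f1'/f1.
- by rewrite f2 // f2'; last exact: f1.
- exact/g1/g1'.
- by rewrite g2' // g2; last exact: g1'.
- by rewrite fK' ?fK //; exact: f1.
- by rewrite gK ?gK'; last exact: g1'.
Qed.

Definition iso_pair P Q : (X -> X) * (X -> X) :=
  epsilon (inhabits (id, id)) (fun fg => sub_iso P Q fg.1 fg.2).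

Definition iso_fwd P Q := (iso_pair P Q).1.
Definition iso_bwd P Q := (iso_pair P Q).2.

Lemma iso_pairP P Q :
  sub_isomorphic P Q -> sub_iso P Q (iso_fwd P Q) (iso_bwd P Q).
Proof.
case=> f [g fg]; apply: (epsilon_spec (inhabits (id, id))
  (fun fg : (X -> X) * (X -> X) => sub_iso P Q fg.1 fg.2)).
by exists (f, g).
Qed.

End SubsetIsomorphisms.

Lemma iso_refl (X : Alg) : iso X X.
Proof. by exists id, id. Qed.

Lemma iso_sym (X Y : Alg) : iso X Y -> iso Y X.
Proof.
case=> h [g [hh [gh hg]]]; exists g, h; split=> [y|//].
by rewrite -{1}(hg y) -hh gh.
Qed.

Lemma iso_trans (X Y Z : Alg) : iso X Y -> iso Y Z -> iso X Z.
Proof.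
case=> h [g [hh [gh hg]]] [h' [g' [hh' [gh' hg']]]].
exists (h' \o h), (g \o g'); split=> [x|]; first by rewrite /= hh hh'.
by split=> z /=; rewrite ?gh' ?gh ?hg ?hg'.
Qed.

Lemma iso_component_sub_isomorphic (X : Alg) (x y : X) :
  iso (component x) (component y) -> sub_isomorphic (conn x) (conn y).
Proof.
case=> h [g [hh [gh hg]]].
have hg' : hom g by move=> b; rewrite -{1}(hg b) -hh gh.
have opE (v w : X) (Hw : conn v w) :
    exist (conn v) (op w) (conn_closed Hw) = @op (component v) (exist _ w Hw).
  exact: sig_val_inj.
exists (extend (fun s => proj1_sig (h s)) x).
exists (extend (fun s => proj1_sig (g s)) y).
split=> z Hz.
- by rewrite (extendE _ _ Hz); exact: proj2_sig.
- by rewrite (extendE _ _ Hz) (extendE _ _ (conn_closed Hz)) opE hh.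
- by rewrite (extendE _ _ Hz); exact: proj2_sig.
- by rewrite (extendE _ _ Hz) (extendE _ _ (conn_closed Hz)) opE hg'.
- rewrite (extendE _ _ Hz) (extendE _ _ (proj2_sig (h _))).
  by case: (h _) (gh (exist _ z Hz)) => /= ? ? ->.
- rewrite (extendE _ _ Hz) (extendE _ _ (proj2_sig (g _))).
  by case: (g _) (hg (exist _ z Hz)) => /= ? ? ->.
Qed.

Section SaturatedSubalgebra.
Variables (X : Alg) (N : X -> Prop) (HN : Defs.closed N) (m0 : X) (Nm0 : N m0).
Hypothesis N_conn : forall a b : X, conn a b -> N a -> N b.

Lemma val_iter n (s : subalg HN Nm0) :
  proj1_sig (iter n (@op (subalg HN Nm0)) s) = iter n (@op X) (proj1_sig s).
Proof. by elim: n => //= n ->. Qed.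

Lemma conn_subalg (s t : subalg HN Nm0) :
  conn s t <-> conn (proj1_sig s) (proj1_sig t).
Proof.
split=> -[m [n E]]; exists m, n.
- by have := f_equal (@proj1_sig _ _) E; rewrite !val_iter.
- by apply: sig_val_inj; rewrite !val_iter.
Qed.

Lemma iso_component_subalg (s : subalg HN Nm0) :
  iso (component s) (component (proj1_sig s)).
Proof.
pose h (u : component s) : component (proj1_sig s) :=
  exist _ (proj1_sig (proj1_sig u)) (proj1 (conn_subalg _ _) (proj2_sig u)).
pose g (w : component (proj1_sig s)) : component s :=
  let t := exist N (proj1_sig w) (N_conn (proj2_sig w) (proj2_sig s)) in
  exist _ t (proj2 (conn_subalg s t) (proj2_sig w)).
exists h, g; split; first by move=> u; apply: sig_val_inj.
by split=> u; apply: sig_val_inj => //=; apply: sig_val_inj.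
Qed.

End SaturatedSubalgebra.

Section TwoRepresentatives.
Variables (X : Alg) (c : X -> Prop).

Definition pick1 : X := epsilon (inhabits (pt X)) c.

Definition pick2 : X :=
  if excluded_middle_informative (exists y, c y /\ ~ conn pick1 y) is left H
  then proj1_sig (constructive_indefinite_description _ H) else pick1.

Lemma pick1P : (exists y, c y) -> c pick1.
Proof. exact: epsilon_spec. Qed.

Lemma pick2P : (exists y, c y) -> c pick2.
Proof.
rewrite /pick2; case: excluded_middle_informative => [H _|_]; last exact: pick1P.
by case: constructive_indefinite_description => y [].
Qed.

Lemma pick2_conn y : conn pick1 pick2 -> c y -> conn pick1 y.
Proof.
move=> H12 cy; apply: NNPP => Ny; move: H12; rewrite /pick2.
case: excluded_middle_informative => [H|[]]; last by exists y.
by case: constructive_indefinite_description => z [].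
Qed.

End TwoRepresentatives.

Section Reduct.
Variable A : Alg.
Implicit Types a b y z : A.

Definition cls a : A -> Prop := fun y => sub_isomorphic (conn a) (conn y).
Definition rep1 a : A := pick1 (cls a).
Definition rep2 a : A := pick2 (cls a).

Lemma rep1_iso a : sub_isomorphic (conn a) (conn (rep1 a)).
Proof. by apply: (@pick1P _ (cls a)); exists a; exact: sub_isomorphic_refl. Qed.

Lemma rep2_iso a : sub_isomorphic (conn a) (conn (rep2 a)).
Proof. by apply: (@pick2P _ (cls a)); exists a; exact: sub_isomorphic_refl. Qed.

Lemma cls_iso a b : sub_isomorphic (conn a) (conn b) -> cls a = cls b.
Proof.
move=> Hab; apply: functional_extensionality => y.
apply: propositional_extensionality; split.
- exact: sub_isomorphic_trans (sub_isomorphic_sym Hab).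
- exact: sub_isomorphic_trans Hab.
Qed.

Lemma cls_conn a b : conn a b -> cls a = cls b.
Proof. by move=> Hab; rewrite /cls (conn_eq Hab). Qed.

Lemma rep_conn a b : conn a b -> rep1 a = rep1 b /\ rep2 a = rep2 b.
Proof. by move=> Hab; rewrite /rep1 /rep2 (cls_conn Hab). Qed.

Lemma rep1_op y : rep1 (op y) = rep1 y.
Proof. by case: (rep_conn (conn_op y)). Qed.

Lemma rep2_op y : rep2 (op y) = rep2 y.
Proof. by case: (rep_conn (conn_op y)). Qed.

Lemma cls_rep1 a z : conn (rep1 a) z -> cls z = cls a.
Proof.
move=> H; rewrite -(cls_conn H); by rewrite (cls_iso (rep1_iso a)).
Qed.

Lemma cls_rep2 a z : conn (rep2 a) z -> cls z = cls a.
Proof.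
move=> H; rewrite -(cls_conn H); by rewrite (cls_iso (rep2_iso a)).
Qed.

Definition kept a : Prop := conn a (rep1 a) \/ conn a (rep2 a).

Lemma kept_conn a b : conn a b -> kept a -> kept b.
Proof.
by move=> Hab; rewrite /kept (conn_eq Hab); case: (rep_conn Hab) => -> ->.
Qed.

Lemma kept_closed : Defs.closed kept.
Proof. by move=> a; apply: kept_conn; exact: conn_op. Qed.

Lemma kept_rep1 a z : conn (rep1 a) z -> kept z.
Proof. by move=> H; rewrite /kept /rep1 (cls_rep1 H); left; exact: conn_sym. Qed.

Lemma kept_rep2 a z : conn (rep2 a) z -> kept z.
Proof. by move=> H; rewrite /kept /rep2 (cls_rep2 H); right; exact: conn_sym. Qed.

Lemma kept_rep1_pt : kept (rep1 (pt A)).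
Proof. exact: kept_rep1 (conn_refl _). Qed.

Definition reduct : Alg := subalg kept_closed kept_rep1_pt.

Definition to_rep1 y : A := iso_fwd (conn y) (conn (rep1 y)) y.
Definition to_rep2 y : A := iso_fwd (conn y) (conn (rep2 y)) y.

Lemma to_rep1_conn y : conn (rep1 y) (to_rep1 y).
Proof. exact: sub_iso_maps (iso_pairP (rep1_iso y)) _ (conn_refl y). Qed.

Lemma to_rep2_conn y : conn (rep2 y) (to_rep2 y).
Proof. exact: sub_iso_maps (iso_pairP (rep2_iso y)) _ (conn_refl y). Qed.

Lemma to_rep1_op y : to_rep1 (op y) = op (to_rep1 y).
Proof.
rewrite /to_rep1 conn_opE rep1_op.
exact: sub_iso_hom (iso_pairP (rep1_iso y)) _ (conn_refl y).
Qed.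

Lemma to_rep2_op y : to_rep2 (op y) = op (to_rep2 y).
Proof.
rewrite /to_rep2 conn_opE rep2_op.
exact: sub_iso_hom (iso_pairP (rep2_iso y)) _ (conn_refl y).
Qed.

Definition to_kept a : A :=
  if excluded_middle_informative (kept a) then a else to_rep1 a.

Lemma retract_kept : retract kept.
Proof.
split; first exact: kept_closed.
split; first by exists (rep1 (pt A)); exact: kept_rep1_pt.
exists to_kept; split; [|split] => a; rewrite /to_kept.
- have Ka := @kept_conn _ _ (conn_op a).
  have Kop := @kept_conn _ _ (conn_sym (conn_op a)).
  case: excluded_middle_informative => Kopa;
    case: excluded_middle_informative => Ka' /=; by [|tauto|exact: to_rep1_op].
- case: excluded_middle_informative => //= _.
  exact: kept_rep1 (to_rep1_conn a).
- by case: excluded_middle_informative.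
Qed.

Lemma inR_reduct : inR A reduct.
Proof.
by exists kept, kept_closed, _, kept_rep1_pt; split;
  [exact: retract_kept | exact: iso_refl].
Qed.

Lemma starstar_reduct : starstar reduct.
Proof.
move=> x1 x2 x3 I12 I13 _.
have lift (s t : reduct) : iso (component s) (component t) ->
    cls (proj1_sig s) = cls (proj1_sig t).
  move=> Ist; apply/cls_iso/iso_component_sub_isomorphic.
  have isoN := @iso_component_subalg _ _ kept_closed _ kept_rep1_pt kept_conn.
  exact: iso_trans (iso_sym (isoN s)) (iso_trans Ist (isoN t)).
have join (s t : reduct) r : conn (proj1_sig s) r -> conn (proj1_sig t) r ->
    same_component s t.
  move=> Hs Ht; apply/same_component_conn/conn_subalg.
  exact: conn_trans Hs (conn_sym Ht).
move: (proj2_sig x1) (proj2_sig x2) (proj2_sig x3).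
rewrite /kept /rep1 /rep2 -(lift _ _ I12) -(lift _ _ I13).
by case=> H1; case=> H2; case=> H3; first [left; exact: join H1 H2
  | right; left; exact: join H1 H3 | right; right; exact: join H2 H3].
Qed.

Definition reduct_power : Alg := prodAlg (fun _ : option A => reduct).

Definition rep1_elt y : reduct :=
  exist kept (to_rep1 y) (kept_rep1 (to_rep1_conn y)).
Definition rep2_elt y : reduct :=
  exist kept (to_rep2 y) (kept_rep2 (to_rep2_conn y)).

Definition embed y : reduct_power := fun i =>
  if i is Some j then
    if excluded_middle_informative (conn y j) then rep2_elt y else rep1_elt y
  else rep1_elt y.

Lemma embed_hom : hom embed.
Proof.
move=> y; apply: functional_extensionality => -[j|] /=;
  last by apply: sig_val_inj; exact: to_rep1_op.
rewrite /embed conn_opE; case: excluded_middle_informative => H /=;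
  apply: sig_val_inj; [exact: to_rep2_op | exact: to_rep1_op].
Qed.

Definition base (x : reduct_power) : A := proj1_sig (x None).

(* [j] marks the component of the embedded element when the coordinate at [j]
   lies in the second chosen component but not in the first one. *)
Definition marks (x : reduct_power) j : Prop :=
  sub_isomorphic (conn j) (conn (base x)) /\
  conn (rep2 (base x)) (proj1_sig (x (Some j))) /\
  ~ conn (rep1 (base x)) (proj1_sig (x (Some j))).

Definition marked (x : reduct_power) : A :=
  if excluded_middle_informative (exists j, marks x j) is left H
  then proj1_sig (constructive_indefinite_description _ H) else rep1 (base x).

Definition unembed (x : reduct_power) : A :=
  let z := base x in
  if excluded_middle_informative (conn (rep1 z) z)
  then iso_bwd (conn (marked x)) (conn (rep1 z)) z
  else iso_bwd (conn (marked x)) (conn (rep2 z)) z.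

Lemma marks_op x : marks (op x) = marks x.
Proof.
apply: functional_extensionality => j.
by rewrite /marks /base /= rep1_op rep2_op conn_opE !conn_opr.
Qed.

Lemma marked_op x : marked (op x) = marked x.
Proof. by rewrite /marked marks_op /base /= rep1_op. Qed.

Lemma marked_iso x : sub_isomorphic (conn (marked x)) (conn (base x)).
Proof.
rewrite /marked; case: excluded_middle_informative => [H|_].
- by case: constructive_indefinite_description => j [].
- exact/sub_isomorphic_sym/rep1_iso.
Qed.

Lemma unembed_hom : hom unembed.
Proof.
move=> x; rewrite /unembed marked_op /base /= rep1_op rep2_op conn_opr.
have [K1|K2] := proj2_sig (x None); case: excluded_middle_informative => H.
- exact: sub_iso_hom_inv (iso_pairP (sub_isomorphic_trans (marked_iso x)
    (rep1_iso _))) _ H.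
- by case: H; exact: conn_sym.
- exact: sub_iso_hom_inv (iso_pairP (sub_isomorphic_trans (marked_iso x)
    (rep1_iso _))) _ H.
- exact: sub_iso_hom_inv (iso_pairP (sub_isomorphic_trans (marked_iso x)
    (rep2_iso _))) _ (conn_sym K2).
Qed.

Lemma base_embed y : base (embed y) = to_rep1 y.
Proof. by []. Qed.

Lemma marked_embed y : conn (marked (embed y)) = conn y.
Proof.
have [E1 E2] : rep1 (to_rep1 y) = rep1 y /\ rep2 (to_rep1 y) = rep2 y.
  by rewrite /rep1 /rep2 (cls_rep1 (to_rep1_conn y)).
rewrite /marked base_embed E1; case: excluded_middle_informative => [H|NH].
- case: constructive_indefinite_description => j [_ [_]] /=.
  rewrite base_embed E1 /embed; case: excluded_middle_informative => Hj /= N1.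
  + exact/esym/conn_eq.
  + by case: N1; exact: to_rep1_conn.
- have R12 : conn (rep1 y) (rep2 y).
    apply: NNPP => N12; apply: NH; exists y.
    rewrite /marks base_embed E1 E2 /embed -(conn_eq (to_rep1_conn y)).
    case: excluded_middle_informative => [_|[]] /=; last exact: conn_refl.
    split; first exact: rep1_iso.
    split=> [|H]; first exact: to_rep2_conn.
    exact/N12/(conn_trans H (conn_sym (to_rep2_conn y))).
  exact/conn_eq/(pick2_conn R12)/sub_isomorphic_refl.
Qed.

Lemma unembedK y : unembed (embed y) = y.
Proof.
have Hz := to_rep1_conn y.
rewrite /unembed marked_embed base_embed /rep1 (cls_rep1 Hz) -/(rep1 y).
case: excluded_middle_informative => [_|[]] /=; last exact: Hz.
exact: sub_iso_K (iso_pairP (rep1_iso y)) _ (conn_refl y).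
Qed.

End Reduct.

Lemma inR_of_retraction (X Y : Alg) (e : Y -> X) (r : X -> Y) :
  hom e -> hom r -> (forall y, r (e y) = y) -> inR X Y.
Proof.
move=> he hr eK.
pose N (x : X) := exists y, x = e y.
have HN : Defs.closed N by move=> x [y ->]; exists (op y); rewrite he.
have Nm0 : N (e (pt Y)) by exists (pt Y).
exists N, HN, _, Nm0; split.
- split; first exact: HN.
  split; first by exists (e (pt Y)).
  exists (e \o r); split; [|split] => x /=.
  + by rewrite hr he.
  + by exists (r x).
  + by case=> y ->; rewrite eK.
- exists (fun y => exist N (e y) (ex_intro _ y erefl)).
  exists (fun s => r (proj1_sig s)); split; [|split].
  + by move=> y; apply: sig_val_inj => /=; rewrite he.
  + by move=> y /=; rewrite eK.
  + by case=> x [y Ey]; apply: sig_val_inj => /=; rewrite Ey eK.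
Qed.

Lemma V_retract_variety (K : Alg -> Prop) : retract_variety (V K).
Proof.
split; [|split].
- by move=> X Y XY VX C HC KC; exact: (proj1 HC) _ _ XY (VX C HC KC).
- by move=> X Y VX XY C HC KC; exact: (proj1 (proj2 HC)) _ _ (VX C HC KC) XY.
- by move=> I F VF C HC KC; apply: (proj2 (proj2 HC)) => i; exact: VF.
Qed.

Lemma V_iso_class_self (X : Alg) : V (iso_class X) X.
Proof. by move=> C _ KC; apply: KC; exact: iso_refl. Qed.

Lemma V_iso_class_sub (X Y : Alg) :
  V (iso_class Y) X -> forall Z, V (iso_class X) Z -> V (iso_class Y) Z.
Proof.
move=> VX Z VZ; apply: VZ => [|W XW]; first exact: V_retract_variety.
exact: (proj1 (V_retract_variety _)) XW VX.
Qed.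

Theorem lemma5p1 (A : Alg) :
  exists B : Alg, inR A B /\ starstar B /\
    (forall X : Alg, V (iso_class A) X <-> V (iso_class B) X).
Proof.
exists (reduct A); split; first exact: inR_reduct.
split; first exact: starstar_reduct.
have [_ [VRB VPB]] := V_retract_variety (iso_class (reduct A)).
have [_ [VRA _]] := V_retract_variety (iso_class A).
have A_in_VB : V (iso_class (reduct A)) A.
  apply: VRB (inR_of_retraction (@embed_hom A) (@unembed_hom A) (@unembedK A)).
  by apply: VPB => _; exact: V_iso_class_self.
have B_in_VA := VRA _ _ (@V_iso_class_self A) (inR_reduct A).
by move=> X; split; apply: V_iso_class_sub.
Qed.
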